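(* Let $\beta,\theta,\gamma>0$ and let $\mathcal{L}$ and $(M_t)$ be as in the context. There exists a function $\psi:\mathbb{N}_+\to(0,\infty)$ with $0<\inf_{\mathbb{N}_+}\psi<\sup_{\mathbb{N}_+}\psi\le1$ such that for every $V\in\mathcal{S}\cup\{[x^p]:p\ge1\}$: (i) there exist real constants $a<b$, $\xi$ and $\zeta>0$ such that $$\mathcal{L}V\le aV+\zeta\psi,\qquad b\psi\le\mathcal{L}\psi\le\xi\psi\quad\text{pointwise on }\mathbb{N}_+;$$ (ii) for $R$ large enough, the set $K=\{x\in\mathbb{N}_+:\psi(x)\ge V(x)/R\}$ is non-empty and finite, and for all $x,y\in K$ and $t_0>0$, $M_{t_0}(x,y)>0$.
   Context: $\mathcal{L}$ acts on functions $f:\mathbb{N}_+\to\mathbb{R}$ by $$\mathcal{L}f(n)=\beta n(f(n+1)-f(n))-\theta nf(n)+\sum_{j=1}^{n-1}\frac{\gamma n}{j(j+1)}\big(f(j)+f(n-j)-f(n)\big).$$ It is the generator of the first moment semigroup $M_tf(n)=\mathbb{E}_{\delta_n}[\sum_{\mathcal{C}}f(|\mathcal{C}|)]$ (sum over active clusters at time $t$) of the GFI process with parameters $\beta,\theta,\gamma$, started from one active cluster which is a uniform random recursive tree of size $n$; in this process each active cluster of size $n$ independently becomes inactive at rate $\theta n$, grows to size $n+1$ at rate $\beta n$, and splits into clusters of sizes $n-j$ and $j$ at rate $\gamma n/(j(j+1))$. $M_t(n,m)=M_t\mathbf{1}_m(n)$ is the mean number of active clusters of size $m$ at time $t$. $[x^p](n)=n^p$.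 $\mathcal{S}$ is the set of functions $f:\mathbb{N}_+\to[1,\infty)$ that are increasing with $\lim_{n\to\infty}f(n)=\infty$, satisfy $f(n+1)/(n+1)\le f(n)/n$ for all $n$, and $\sum_{j\ge1}f(j)/(j(j+1))<\infty$. *)

From HB Require Import structures.
From mathcomp Require Import all_boot all_order all_algebra.
From mathcomp Require Import all_classical all_reals all_analysis.
Set Implicit Arguments. Unset Strict Implicit. Unset Printing Implicit Defensive.
Import Order.TTheory GRing.Theory Num.Theory.
Import numFieldNormedType.Exports.
Local Open Scope classical_set_scope.
Local Open Scope ring_scope.

(* Functions on N_+ are represented as functions nat -> R; only the values at
   n >= 1 ever matter (L f n for n >= 1 only uses f at indices >= 1). *)

Definition split_rate {R : realType} (gamma : R) (n j : nat) : R :=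
  gamma * n%:R / (j%:R * (j.+1)%:R).

Definition gen_L {R : realType} (beta theta gamma : R) (f : nat -> R) (n : nat) : R :=
  beta * n%:R * (f n.+1 - f n) - theta * n%:R * f n
  + \sum_(1 <= j < n) split_rate gamma n j * (f j + f (n - j)%N - f n).

Definition total_rate {R : realType} (beta theta gamma : R) (n : nat) : R :=
  beta * n%:R + theta * n%:R + \sum_(1 <= j < n) split_rate gamma n j.

(* Picard iterates of the mild (integral) backward Kolmogorov equation of the
   first moment semigroup:
   M_t(n,m) = e^{-r(n)t} 1_{n=m}
     + int_0^t e^{-r(n)s} [ beta n M_{t-s}(n+1,m)
                 + sum_{j=1}^{n-1} gamma n/(j(j+1)) (M_{t-s}(j,m) + M_{t-s}(n-j,m)) ] ds *)
Fixpoint moment_iter {R : realType} (beta theta gamma : R) (k : nat)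
  : R -> nat -> nat -> \bar R :=
  match k with
  | 0 => fun _ _ _ => 0%E
  | k'.+1 => fun t n m =>
      ((expR (- total_rate beta theta gamma n * t) * (n == m)%:R)%:E
       + \int[@lebesgue_measure R]_(s in `[0%R, t]%classic)
           ((expR (- total_rate beta theta gamma n * s))%:E *
            ((beta * n%:R)%:E * moment_iter beta theta gamma k' (t - s) n.+1 m
             + \sum_(1 <= j < n) (split_rate gamma n j)%:E *
                 (moment_iter beta theta gamma k' (t - s) j m
                  + moment_iter beta theta gamma k' (t - s) (n - j)%N m))))%E
  end.

(* M_t(n,m): mean number of active clusters of size m at time t, started from one
   active cluster of size n; defined as the minimal nonnegative solution of the
   mild backward equation (monotone limit of the Picard iterates). *)
Definition moment_M {R : realType} (beta theta gamma : R) (t : R) (n m : nat) : \bar R :=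
  ereal_sup (range (fun k => moment_iter beta theta gamma k t n m)).

Definition in_S {R : realType} (f : nat -> R) : Prop :=
  (forall n, (0 < n)%N -> 1 <= f n) /\
  (forall n, (0 < n)%N -> f n <= f n.+1) /\
  (f @ \oo --> +oo) /\
  (forall n, (0 < n)%N -> f n.+1 / (n.+1)%:R <= f n / n%:R) /\
  (\sum_(1 <= j <oo) (f j / (j%:R * (j.+1)%:R))%:E < +oo)%E.

Definition powfun {R : realType} (p : R) (n : nat) : R := (n%:R) `^ p.

(* The function psi is constant beyond a cutoff J, with the tail value chosen
   against the head values so that the coefficient of n in L psi n vanishes;
   what remains of L psi is bounded, and since psi is bounded away
   from 0 this gives b psi <= L psi <= xi psi.  Every V in S or [x^p] satisfies
   L V n <= (c - d n) V n for large n, so L V - a V is eventually nonpositive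
   for every a, hence bounded above, and the bound is absorbed into zeta psi.
   The set K lies in a sublevel set of V, hence is finite, and contains 1 once
   R is large.  Finally M_t(x, y) > 0 because the Picard iterates propagate a
   positive lower bound, uniform on compact time intervals, along the jumps
   x -> x + 1 (growth) and x -> y < x (splitting). *)

From HB Require Import structures.
From mathcomp Require Import all_boot all_order all_algebra.
From mathcomp Require Import all_classical all_reals all_analysis.
From mathcomp Require Import ring lra zify.
Import Order.TTheory GRing.Theory Num.Theory.
Import numFieldNormedType.Exports.
Local Open Scope classical_set_scope.
Local Open Scope ring_scope.

Section Auxiliary.
Context {R : realType}.

Lemma bounded_upto (g : nat -> R) N : exists M, forall n, (n <= N)%N -> `|g n| <= M.
Proof.
elim: N => [|N [M le_M]]; first by exists `|g 0%N|; case.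
exists (Num.max M `|g N.+1|) => n; rewrite leq_eqVlt => /orP[/eqP->|].
  by rewrite le_max lexx orbT.
by rewrite ltnS => /le_M le_n; rewrite le_max le_n.
Qed.

Lemma bounded_above_of_eventually_le0 (g : nat -> R) N :
  (forall n, (N <= n)%N -> g n <= 0) -> exists2 M, 0 < M & forall n, g n <= M.
Proof.
move=> le0; have [M le_M] := bounded_upto g N.
exists (1 + `|M|) => [|n]; first by rewrite ltr_pwDl.
have [nN|Nn] := leqP n N; last by apply: le_trans (le0 n (ltnW Nn)) _; rewrite addr_ge0.
by apply: le_trans (ler_norm _) _; apply: le_trans (le_M n nN) _; rewrite ler_wpDl // ler_norm.
Qed.

Lemma natr_ge_eventually (x : R) : exists N, forall n, (N <= n)%N -> x <= n%:R.
Proof.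
exists (Num.Def.archi_bound `|x|) => n le_n.
apply: le_trans (ler_norm x) _; apply/ltW/(lt_le_trans (archi_boundP (normr_ge0 x))).
by rewrite ler_nat.
Qed.

Lemma sum_inv_mulSn m n : (0 < m)%N -> (m <= n)%N ->
  \sum_(m <= j < n) (j%:R * j.+1%:R)^-1 = m%:R^-1 - n%:R^-1 :> R.
Proof.
move=> m0 le_mn; rewrite addrC -[m%:R^-1]opprK.
apply: (telescope_sumr_eq (fun k => - k%:R^-1)) => // j /andP[mj _].
have j0 : j%:R != 0 :> R by rewrite pnatr_eq0 -lt0n (leq_trans m0 mj).
by rewrite -natr1; field; rewrite j0 natr1 pnatr_eq0.
Qed.

Lemma expR_le_1D2x (y : R) : 0 <= y <= 2^-1 -> expR y <= 1 + 2 * y.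
Proof.
move=> /andP[y0 y_le]; have e0 := expR_gt0 y.
have := expR_ge1Dx (- y); rewrite expRN -(ler_pM2r e0) mulVf ?gt_eqF //.
nra.
Qed.

Lemma powR_superadditive (p s t : R) : 1 <= p -> 0 < s -> 0 < t ->
  s `^ p + t `^ p <= (s + t) `^ p.
Proof.
move=> p1 s0 t0; set u := s + t; have u0 : 0 < u by rewrite addr_gt0.
have scale x : 0 < x -> x `^ p = (x / u) `^ p * u `^ p.
  by move=> x0; rewrite -powRM ?divfK ?divr_ge0 ?ltW // lt0r_neq0.
have frac_le x : 0 < x -> x <= u -> (x / u) `^ p <= x / u.
  by move=> x0 le_xu; rewrite ge1r_powR // divr_gt0 //= ler_pdivrMr // mul1r.
rewrite (scale s s0) (scale t t0) -mulrDl ler_piMl ?powR_ge0 //.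
have le_su : s <= u by rewrite lerDl ltW.
have le_tu : t <= u by rewrite lerDr ltW.
apply: le_trans (lerD (frac_le s s0 le_su) (frac_le t t0 le_tu)) _.
by rewrite -mulrDl divff ?lt0r_neq0.
Qed.

Lemma powR_succ_le (p x : R) : 1 <= p -> 0 < x -> 2 * p <= x ->
  (x + 1) `^ p <= x `^ p * (1 + 2 * p / x).
Proof.
move=> p1 x0 le_2p_x; have p0 : 0 <= p by lra.
have -> : x + 1 = x * (1 + x^-1) by rewrite mulrDr mulr1 divff ?gt_eqF.
rewrite powRM ?(ltW x0) ?addr_ge0 ?invr_ge0 ?(ltW x0) // ler_pM2l ?powR_gt0 //.
apply: (@le_trans _ _ (expR (x^-1) `^ p)).
  by rewrite ge0_ler_powR ?nnegrE ?expR_ge0 ?addr_ge0 ?invr_ge0 ?(ltW x0) // expR_ge1Dx.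
rewrite -expRM [x^-1 * p]mulrC -mulrA expR_le_1D2x // divr_ge0 ?(ltW x0) //=.
by rewrite ler_pdivrMr //; lra.
Qed.

Local Notation mu := (@lebesgue_measure R).

(* No measurability is needed: a nonnegative integral is a supremum over the
   simple functions below the integrand. *)
Lemma le_ge0_integral (D : set R) (f g : R -> \bar R) :
  (forall x, D x -> (0 <= g x)%E) -> (forall x, D x -> (g x <= f x)%E) ->
  (\int[mu]_(x in D) g x <= \int[mu]_(x in D) f x)%E.
Proof.
move=> g0 gf.
rewrite !ge0_integralE //; last by move=> x Dx; exact: le_trans (g0 x Dx) (gf x Dx).
apply: ereal_sup_le => _ [h hg <-]; exists h => //= x.
apply: le_trans (hg x) _; rewrite /patch; case: ifP => // /[!inE] Dx; exact: gf.
Qed.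

Lemma integral_scaled_indic_itv (c a t : R) : 0 <= c -> 0 < a -> a <= t ->
  (\int[mu]_(s in `[0%R, t]%classic) (c * \1_(`[0%R, a]%classic) s)%:E
   = (c * a)%:E)%E.
Proof.
move=> c0 a0 le_at.
rewrite (@integralZl_indic _ _ _ mu _ (measurable_itv _) (fun=> `[0%R, a]%classic)) //;
  last by move=> /(le_lt_trans c0); rewrite ltxx.
rewrite integral_indic // setIidl; last first.
  by move=> x /=; rewrite !in_itv /= => /andP[-> xa]; exact: le_trans xa le_at.
have := @lebesgue_measure_itv R `[0, a]; rewrite /= lte_fin a0 oppr0 adde0.
by move=> ->.
Qed.
End Auxiliary.

Section LyapunovClass.
Context {R : realType}.

Definition S_mass (V : nat -> R) : R :=
  fine (\sum_(1 <= j <oo) (V j / (j%:R * j.+1%:R))%:E).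

Lemma in_S_le (V : nat -> R) k n : in_S V -> (0 < k)%N -> (k <= n)%N -> V k <= V n.
Proof.
move=> [_ [V_incr _]] k0 /subnKC <-; elim: (n - k)%N => [|d IH]; first by rewrite addn0.
by apply: le_trans IH _; rewrite addnS V_incr // addn_gt0 k0.
Qed.

Lemma sum_le_S_mass (V : nat -> R) n : in_S V ->
  \sum_(1 <= j < n) V j / (j%:R * j.+1%:R) <= S_mass V.
Proof.
move=> [V_ge1 [_ [_ [_ V_sum]]]].
have term_ge0 j : (1 <= j)%N -> true -> (0 <= (V j / (j%:R * j.+1%:R))%:E)%E.
  by move=> j1 _; rewrite lee_fin divr_ge0 ?mulr_ge0 // (le_trans ler01 (V_ge1 j j1)).
rewrite -lee_fin -sumEFin /S_mass fineK; first exact: nneseries_lim_ge.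
by rewrite ge0_fin_numE // nneseries_ge0.
Qed.

Definition in_S_or_powfun (V : nat -> R) : Prop :=
  in_S V \/ exists p : R, 1 <= p /\ forall n, (0 < n)%N -> V n = powfun p n.

Lemma in_S_or_powfun_ge0 {V n} : in_S_or_powfun V -> (0 < n)%N -> 0 <= V n.
Proof.
case=> [[V_ge1 _]|[p [_ V_pow]]] n0; last by rewrite V_pow ?powR_ge0.
exact: le_trans ler01 (V_ge1 n n0).
Qed.

Lemma in_S_or_powfun_sublevel V (r : R) : in_S_or_powfun V ->
  exists N, forall n, (0 < n)%N -> V n <= r -> (n < N)%N.
Proof.
case=> [[_ [_ [V_infty _]]]|[p [p1 V_pow]]].
  have [N _ V_large] := cvgry_gt V_infty r.
  by exists N => n _ le_r; rewrite ltnNge; apply/negP => /V_large /=; rewrite ltNge le_r.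
have [N le_N] := natr_ge_eventually (r + 1).
exists N => n n0 le_r; rewrite ltnNge; apply/negP => /le_N.
have : n%:R <= V n by rewrite V_pow // -[leLHS]powRr1 ?ler0n // ler_powR ?ler1n.
lra.
Qed.

Lemma sublevel_psi_finite {psi V : nat -> R} : in_S_or_powfun V ->
  (forall n, (0 < n)%N -> 0 < psi n <= 1) ->
  exists R0, forall r, R0 <= r ->
    [set x | (0 < x)%N /\ V x / r <= psi x] !=set0 /\
    finite_set [set x | (0 < x)%N /\ V x / r <= psi x].
Proof.
move=> V_class psi_01; have /andP[psi1_gt0 _] := psi_01 1%N isT.
have V1 := in_S_or_powfun_ge0 V_class (ltn0Sn 0).
exists (1 + V 1%N / psi 1%N) => r le_r; have r0 : 0 < r.
  by apply: lt_le_trans le_r; have := divr_ge0 V1 (ltW psi1_gt0); lra.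
split.
  exists 1%N; split => //; rewrite ler_pdivrMr // mulrC -ler_pdivrMr //.
  by apply: le_trans le_r; rewrite lerDr.
have [N bound_N] := in_S_or_powfun_sublevel V r V_class.
apply: sub_finite_set (finite_II N) => x [x0 le_x]; apply: bound_N => //=.
have /andP[_ psi_x1] := psi_01 x x0.
by move: (le_trans le_x psi_x1); rewrite ler_pdivrMr // mul1r.
Qed.
End LyapunovClass.

Section Generator.
Context {R : realType} (beta theta gamma : R).
Hypotheses (beta_gt0 : 0 < beta) (theta_gt0 : 0 < theta) (gamma_gt0 : 0 < gamma).

Lemma split_rate_ge0 n j : 0 <= split_rate gamma n j.
Proof. by apply: divr_ge0; rewrite mulr_ge0 ?ler0n ?ltW. Qed.

Lemma split_rate_gt0 n j : (0 < n)%N -> (0 < j)%N -> 0 < split_rate gamma n j.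
Proof. by move=> n0 j0; apply: divr_gt0; rewrite ?mulr_gt0 ?ltr0n. Qed.

Lemma total_rate_ge0 n : 0 <= total_rate beta theta gamma n.
Proof.
apply: addr_ge0; first by rewrite addr_ge0 ?mulr_ge0 ?ler0n ?ltW.
by apply: sumr_ge0 => j _; exact: split_rate_ge0.
Qed.

Section Positivity.
Local Notation M_ := (moment_iter beta theta gamma).
Local Notation r_ := (total_rate beta theta gamma).
Local Open Scope ereal_scope.

Definition jump_part k tau n m : \bar R :=
  (beta * n%:R)%:E * M_ k tau n.+1 m
  + \sum_(1 <= j < n) (split_rate gamma n j)%:E * (M_ k tau j m + M_ k tau (n - j)%N m).

Lemma moment_iterS k t n m : M_ k.+1 t n m =
  (expR (- r_ n * t) * (n == m)%:R)%:E
  + \int[@lebesgue_measure R]_(s in `[0%R, t]%classic)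
      ((expR (- r_ n * s))%:E * jump_part k (t - s) n m).
Proof. by []. Qed.

Lemma moment_iter_ge0 k t n m : 0 <= M_ k t n m.
Proof.
elim: k t n m => [//|k IH] t n m; rewrite moment_iterS adde_ge0 //.
apply: integral_ge0 => s _; rewrite mule_ge0 // adde_ge0 ?mule_ge0 //.
  by rewrite lee_fin mulr_ge0 ?ler0n ?ltW.
by apply: sume_ge0 => j _; rewrite mule_ge0 ?adde_ge0 // lee_fin split_rate_ge0.
Qed.

Lemma jump_part_ge0 k tau n m : 0 <= jump_part k tau n m.
Proof.
rewrite adde_ge0 ?mule_ge0 ?moment_iter_ge0 //; first by rewrite lee_fin mulr_ge0 ?ler0n ?ltW.
by apply: sume_ge0 => j _; rewrite mule_ge0 ?adde_ge0 ?moment_iter_ge0 // lee_fin split_rate_ge0.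
Qed.

Lemma jump_part_ge_growth k tau n m :
  (beta * n%:R)%:E * M_ k tau n.+1 m <= jump_part k tau n m.
Proof.
apply: leeDl; apply: sume_ge0 => j _.
by rewrite mule_ge0 ?adde_ge0 ?moment_iter_ge0 // lee_fin split_rate_ge0.
Qed.

Lemma jump_part_ge_split k tau n m y : (1 <= y < n)%N ->
  (split_rate gamma n y)%:E * M_ k tau y m <= jump_part k tau n m.
Proof.
move=> /andP[y1 yn].
have term_ge0 j : 0 <= (split_rate gamma n j)%:E * (M_ k tau j m + M_ k tau (n - j)%N m).
  by rewrite mule_ge0 ?adde_ge0 ?moment_iter_ge0 // lee_fin split_rate_ge0.
apply: le_trans (leeDr _ _); last by rewrite mule_ge0 ?moment_iter_ge0 // lee_fin mulr_ge0 ?ler0n ?ltW.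
rewrite (big_cat_nat y1 (ltnW yn)) /= (big_ltn yn) addeCA.
apply: le_trans (leeDl _ _); last by rewrite adde_ge0 ?sume_ge0.
by rewrite lee_pmul ?leeDl ?moment_iter_ge0 // lee_fin split_rate_ge0.
Qed.

(* Uniformity on compact subintervals of (0, +oo) is what survives the time
   shift t - s inside the integral defining the next iterate. *)
Definition uniformly_positive k n m := forall a b : R, (0 < a)%R -> (a <= b)%R ->
  exists2 d : R, (0 < d)%R & forall t, (a <= t <= b)%R -> d%:E <= M_ k t n m.

Lemma uniformly_positive_diag m : uniformly_positive 1 m m.
Proof.
move=> a b a0 ab; exists (expR (- r_ m * b)); first exact: expR_gt0.
move=> t /andP[_ tb]; rewrite moment_iterS eqxx mulr1.
apply: le_trans (leeDl _ _); last first.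
  apply: integral_ge0 => s _.
  by rewrite mule_ge0 ?jump_part_ge0 // lee_fin expR_ge0.
by rewrite lee_fin ler_expR !mulNr lerN2 ler_wpM2l ?total_rate_ge0.
Qed.

Lemma uniformly_positive_step {k n n' m} {w : R} : (0 < w)%R ->
  (forall tau, w%:E * M_ k tau n' m <= jump_part k tau n m) ->
  uniformly_positive k n' m -> uniformly_positive k.+1 n m.
Proof.
move=> w0 w_le pos_n' a b a0 ab.
have a2_gt0 : (0 < a / 2)%R by rewrite divr_gt0.
have a2_le : (a / 2 <= a)%R by rewrite ler_pdivrMr // ler_peMr // ?ler1n // ltW.
have [d d0 d_le] := pos_n' (a / 2)%R b a2_gt0 (le_trans a2_le ab).
pose c := (expR (- r_ n * b) * w * d)%R.
have c0 : (0 < c)%R by rewrite !mulr_gt0 ?expR_gt0.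
exists (c * (a / 2))%R; first by rewrite mulr_gt0.
move=> t /andP[le_at tb]; rewrite moment_iterS.
apply: le_trans (leeDr _ _); last by rewrite lee_fin mulr_ge0 ?expR_ge0.
rewrite -(integral_scaled_indic_itv _ _ _ (ltW c0) a2_gt0 (le_trans a2_le le_at)).
apply: le_ge0_integral => s; first by move=> _; rewrite lee_fin mulr_ge0 ?ler0n ?ltW.
rewrite /= in_itv /= => /andP[s0 st]; rewrite indicE.
case: (boolP (s \in _)) => [|_]; last by rewrite mulr0 mule_ge0 ?jump_part_ge0.
rewrite inE /= in_itv /= => /andP[_ sa].
rewrite mulr1 /c !EFinM -muleA; apply: lee_pmul; rewrite ?lee_fin ?expR_ge0 //.
- by rewrite mulr_ge0 ?ltW.
- by rewrite ler_expR !mulNr lerN2 ler_wpM2l ?total_rate_ge0 ?(le_trans st tb).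
- apply: le_trans (w_le (t - s)%R).
  by rewrite lee_pmul ?lee_fin ?(ltW w0) ?(ltW d0) // d_le //; apply/andP; split; lra.
Qed.

Lemma uniformly_positive_reach {x y} : (0 < x)%N -> (0 < y)%N ->
  exists k, uniformly_positive k x y.
Proof.
move=> x0 y0; have [le_xy|lt_yx] := leqP x y; last first.
  exists 2%N; refine (uniformly_positive_step (w := split_rate gamma x y) _ _
    (uniformly_positive_diag y)).
  - exact: split_rate_gt0 x0 y0.
  - by move=> tau; apply: jump_part_ge_split; rewrite y0 lt_yx.
rewrite -(subnKC le_xy); move: (y - x)%N => d; clear le_xy; elim: d x x0 => [|d IH] x x0.
  by exists 1%N; rewrite addn0; exact: uniformly_positive_diag.
have [k pos_k] := IH x.+1 isT; rewrite addSnnS in pos_k.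
exists k.+1; refine (uniformly_positive_step (w := beta * x%:R) _ _ pos_k) => [|tau].
  by rewrite mulr_gt0 ?ltr0n.
exact: jump_part_ge_growth.
Qed.

Lemma moment_M_gt0 x y t : (0 < x)%N -> (0 < y)%N -> (0 < t)%R ->
  0 < moment_M beta theta gamma t x y.
Proof.
move=> x0 y0 t0; have [k pos_k] := uniformly_positive_reach x0 y0.
have [d d0 d_le] := pos_k t t t0 (lexx t).
apply: (@lt_le_trans _ _ d%:E); first by rewrite lte_fin.
by apply: le_trans (d_le t _) _; rewrite ?lexx //; apply: ereal_sup_ubound; exists k.
Qed.
End Positivity.

Local Notation L := (gen_L beta theta gamma).

Lemma eq_gen_L {f g : nat -> R} {n} : (forall k, (0 < k)%N -> f k = g k) -> (0 < n)%N ->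
  L f n = L g n.
Proof.
move=> fg n0; rewrite /gen_L !fg //; congr (_ + _).
by apply: eq_big_nat => j /andP[j0 jn]; rewrite !fg // subn_gt0.
Qed.

Lemma split_rate_reflect_le n k : (0 < k)%N -> (k.*2 <= n)%N ->
  split_rate gamma n (n - k) <= gamma.
Proof.
move=> k0 le_2k_n; rewrite /split_rate ler_pdivrMr ?mulr_gt0 ?ltr0n ?subn_gt0 //; last by lia.
by rewrite ler_pM2l // -natrM ler_nat; nia.
Qed.

Section EventuallyConstant.
Variables (f : nat -> R) (J : nat) (B : R).
Hypothesis f_tail : forall {n}, (J < n)%N -> f n = B.

Definition head_mass := \sum_(1 <= j < J.+1) f j / (j%:R * j.+1%:R).

Lemma head_mass_gt0 : (0 < J)%N -> (forall j, (0 < j)%N -> 0 < f j) -> 0 < head_mass.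
Proof.
move=> J0 f_gt0; rewrite /head_mass big_ltn ?ltnS // ltr_pwDl ?divr_gt0 ?f_gt0 //.
rewrite big_nat_cond sumr_ge0 // => j /andP[/andP[j1 _] _].
by rewrite divr_ge0 ?mulr_ge0 // ltW // f_gt0 // ltnW.
Qed.

Definition drift := gamma * head_mass + gamma * B / J.+1%:R - theta * B.

Lemma gen_L_eventually_const n : (J < n)%N -> L f n =
  n%:R * drift - gamma * B
  + \sum_(1 <= k < J.+1) split_rate gamma n (n - k) * (f k - B).
Proof.
move=> Jn; have n0 : (0 < n)%N by apply: leq_ltn_trans Jn.
rewrite /gen_L (f_tail Jn) (f_tail (leqW Jn)) subrr mulr0 add0r.
under eq_bigr do rewrite -addrA mulrDr.
rewrite big_split /= (big_cat_nat (ltn0Sn J) Jn) /=.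
have head : \sum_(1 <= j < J.+1) split_rate gamma n j * f j = gamma * n%:R * head_mass.
  by rewrite /head_mass mulr_sumr; apply: eq_bigr => j _; rewrite /split_rate; ring.
have tail : \sum_(J.+1 <= j < n) split_rate gamma n j * f j
    = gamma * n%:R * B * (J.+1%:R^-1 - n%:R^-1).
  rewrite -sum_inv_mulSn // mulr_sumr; apply: eq_big_nat => j /andP[Jj _].
  by rewrite f_tail // /split_rate; ring.
have reflect_sum : \sum_(1 <= j < n) split_rate gamma n j * (f (n - j)%N - B)
    = \sum_(1 <= k < J.+1) split_rate gamma n (n - k) * (f k - B).
  rewrite big_nat_rev /= (eq_big_nat _ _ (F2 := fun k =>
    split_rate gamma n (n - k) * (f k - B))); last first.
    by move=> k /andP[_ kn]; rewrite add1n subSS (subKn (ltnW kn)).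
  rewrite (big_cat_nat (ltn0Sn J) Jn) /= [X in _ + X]big_nat_cond [X in _ + X]big1 ?addr0 //.
  by move=> k /andP[/andP[Jk _] _]; rewrite f_tail // subrr mulr0.
rewrite head tail reflect_sum /drift.
have n_neq0 : n%:R != 0 :> R by rewrite pnatr_eq0 -lt0n.
by field; rewrite n_neq0 addrC natr1 pnatr_eq0.
Qed.

Lemma gen_L_balanced_bounded : drift = 0 ->
  exists M, forall n, (0 < n)%N -> `|L f n| <= M.
Proof.
move=> drift0; have [D le_D] := bounded_upto (fun k => f k - B) J.
have [M le_M] := bounded_upto (L f) J.*2.
exists (Num.max M (gamma * `|B| + gamma * D *+ J)) => n n0.
have [le_n|lt_n] := leqP n J.*2; first by rewrite le_max le_M.
rewrite le_max; apply/orP; right.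
rewrite gen_L_eventually_const; last by apply: leq_ltn_trans lt_n; rewrite -addnn leq_addl.
rewrite drift0 mulr0 add0r; apply: le_trans (ler_normD _ _) _.
rewrite normrN normrM gtr0_norm // lerD2l.
apply: le_trans (ler_norm_sum _ _ _) _.
rewrite -[J in X in _ <= X]succnK -subn1 -sumr_const_nat; apply: ler_sum_nat => k /andP[k0 kJ].
rewrite normrM ger0_norm ?split_rate_ge0 // ler_pM ?split_rate_ge0 ?le_D //.
by rewrite split_rate_reflect_le // (leq_trans _ (ltnW lt_n)) // leq_double.
Qed.
End EventuallyConstant.

Section Psi.
(* psi_tail makes drift psi J vanish (J is large enough for its denominator
   to be positive); the dip psi_profile 2 = 1/2 makes psi non-constant. *)
Definition psi_cutoff : nat := (Num.Def.archi_bound (gamma / theta)).+2.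
Local Notation J := psi_cutoff.

Definition psi_profile (j : nat) : R := if j == 2%N then 2^-1 else 1.

Definition psi_tail : R := gamma * head_mass psi_profile J / (theta - gamma / J.+1%:R).

Definition psi (n : nat) : R :=
  (if (n <= J)%N then psi_profile n else psi_tail) / (1 + psi_tail).

Lemma psi_cutoff_gt : gamma / J.+1%:R < theta.
Proof.
rewrite ltr_pdivrMr // -ltr_pdivrMl // mulrC.
apply: lt_le_trans (archi_boundP _) _; first by rewrite divr_ge0 ?ltW.
by rewrite ler_nat /psi_cutoff -addn3 leq_addr.
Qed.

Lemma psi_profile_bounds j : 2^-1 <= psi_profile j <= 1.
Proof. by rewrite /psi_profile; case: ifP => _; apply/andP; split; lra. Qed.

Lemma psi_tail_gt0 : 0 < psi_tail.
Proof.
rewrite divr_gt0 ?subr_gt0 ?psi_cutoff_gt // mulr_gt0 // head_mass_gt0 // => j _.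
by case/andP: (psi_profile_bounds j) => + _; lra.
Qed.

Lemma psi_gt0 n : 0 < psi n.
Proof.
rewrite divr_gt0 ?addr_gt0 ?psi_tail_gt0 //; case: ifP => _; last exact: psi_tail_gt0.
by case/andP: (psi_profile_bounds n) => + _; lra.
Qed.

Lemma psi_le1 n : psi n <= 1.
Proof.
have K0 := psi_tail_gt0; rewrite ler_pdivrMr ?mul1r; last by lra.
by case: ifP => _; [case/andP: (psi_profile_bounds n) => _; lra | lra].
Qed.

Definition psi_min : R := Num.min 2^-1 psi_tail / (1 + psi_tail).

Lemma psi_min_gt0 : 0 < psi_min.
Proof. have K0 := psi_tail_gt0; rewrite divr_gt0 ?lt_min ?K0 ?andbT //; lra. Qed.

Lemma psi_min_le n : psi_min <= psi n.
Proof.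
have K0 := psi_tail_gt0; rewrite ler_pM2r ?invr_gt0; last by lra.
by case: ifP => _; rewrite ge_min ?lexx ?orbT // (andP (psi_profile_bounds n)).1.
Qed.

Lemma psi2_lt_psi1 : psi 2 < psi 1.
Proof.
have K0 := psi_tail_gt0; rewrite /psi /psi_profile /= ltr_pM2r ?invr_gt0; lra.
Qed.

Lemma psi_tail_eq n : (J < n)%N -> psi n = psi_tail / (1 + psi_tail).
Proof. by rewrite /psi ltnNge => /negbTE->. Qed.

Lemma drift_psi : drift psi J (psi_tail / (1 + psi_tail)) = 0.
Proof.
rewrite /drift; have -> : head_mass psi J = head_mass psi_profile J / (1 + psi_tail).
  rewrite /head_mass mulr_suml; apply: eq_big_nat => j /andP[_ jJ].
  by rewrite /psi -ltnS jJ mulrAC.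
have -> : head_mass psi_profile J = psi_tail * (theta - gamma / J.+1%:R) / gamma.
  by rewrite /psi_tail divfK ?gt_eqF ?subr_gt0 ?psi_cutoff_gt // mulrC mulKf ?gt_eqF.
have K0 := psi_tail_gt0.
by field; rewrite [1 + J%:R]addrC natr1 pnatr_eq0 !gt_eqF //; lra.
Qed.

Lemma gen_L_psi_bounded : exists M, forall n, (0 < n)%N -> `|L psi n| <= M.
Proof. exact: (gen_L_balanced_bounded _ _ _ psi_tail_eq drift_psi). Qed.
End Psi.

Definition dissipative (V : nat -> R) := forall a : R,
  exists N, forall n, (N <= n)%N -> (0 < n)%N -> L V n <= a * V n.

Lemma dissipative_of_linear_decay (V : nat -> R) (c d : R) N : 0 < d ->
  (forall n, (N <= n)%N -> (0 < n)%N -> 0 <= V n /\ L V n <= (c - d * n%:R) * V n) ->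
  dissipative V.
Proof.
move=> d0 decay a; have [N' le_N'] := natr_ge_eventually ((c - a) / d).
exists (maxn N N') => n; rewrite geq_max => /andP[Nn N'n] n0.
have [V0 le_LV] := decay n Nn n0; apply: le_trans le_LV _; rewrite ler_wpM2r //.
by have := le_N' n N'n; rewrite ler_pdivrMr // mulrC; lra.
Qed.

Lemma gen_L_le_of_in_S {V n} : in_S V -> (0 < n)%N ->
  L V n <= beta * V n + n%:R * (gamma * S_mass V - theta * V n).
Proof.
move=> VS n0; have [V_ge1 [_ [_ [V_ratio _]]]] := VS.
have growth : beta * n%:R * (V n.+1 - V n) <= beta * V n.
  have := V_ratio n n0; rewrite ler_pdivrMr ?ltr0n // mulrAC ler_pdivlMr ?ltr0n // -natr1.
  by rewrite -mulrA ler_pM2l //; lra.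
have splitting : \sum_(1 <= j < n) split_rate gamma n j * (V j + V (n - j)%N - V n)
    <= gamma * n%:R * S_mass V.
  apply: le_trans (_ : \sum_(1 <= j < n) split_rate gamma n j * V j <= _).
    apply: ler_sum_nat => j /andP[j0 jn]; rewrite ler_wpM2l ?split_rate_ge0 //.
    by rewrite -addrA gerDl subr_le0 in_S_le ?subn_gt0 ?leq_subr.
  rewrite (_ : \sum_(1 <= j < n) _ = gamma * n%:R * \sum_(1 <= j < n) V j / (j%:R * j.+1%:R)).
    by rewrite ler_wpM2l ?mulr_ge0 ?ler0n ?(ltW gamma_gt0) ?sum_le_S_mass.
  by rewrite mulr_sumr; apply: eq_bigr => j _; rewrite /split_rate; ring.
rewrite /gen_L; lra.
Qed.

Lemma in_S_dissipative V : in_S V -> dissipative V.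
Proof.
move=> VS; have [V_ge1 [_ [V_infty _]]] := VS.
have [N _ V_large] := cvgry_ge V_infty (2 * gamma * S_mass V / theta).
apply: (@dissipative_of_linear_decay V beta (theta / 2) N); first by rewrite divr_gt0.
move=> n Nn n0; have V1 := V_ge1 n n0; split; first lra.
apply: le_trans (gen_L_le_of_in_S VS n0) _.
have := V_large n Nn; rewrite /= ler_pdivrMr // => le_V.
have : 0 <= n%:R * (theta * V n - 2 * gamma * S_mass V) by rewrite mulr_ge0 ?ler0n //; lra.
lra.
Qed.

Lemma gen_L_powfun_le p n : 1 <= p -> (0 < n)%N -> 2 * p <= n%:R ->
  L (powfun p) n <= (2 * beta * p - theta * n%:R) * powfun p n.
Proof.
move=> p1 n0 le_2p_n; have n_gt0 : 0 < n%:R :> R by rewrite ltr0n.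
have growth := powR_succ_le _ _ p1 n_gt0 le_2p_n.
have splitting : \sum_(1 <= j < n) split_rate gamma n j
    * (powfun p j + powfun p (n - j)%N - powfun p n) <= 0.
  rewrite big_nat_cond sumr_le0 // => j /andP[/andP[j0 jn] _].
  rewrite mulr_ge0_le0 ?split_rate_ge0 // subr_le0 /powfun natrB ?(ltnW jn) //.
  by rewrite -[X in _ <= X `^ p](subrKC j%:R) powR_superadditive ?ltr0n ?subr_gt0 ?ltr_nat.
rewrite /gen_L /powfun -natr1.
set P := n%:R `^ p; have P0 : 0 <= P := powR_ge0 _ _.
have : beta * n%:R * ((n%:R + 1) `^ p - P) <= 2 * beta * p * P.
  apply: le_trans (_ : beta * n%:R * (P * (1 + 2 * p / n%:R) - P) <= _).
    by rewrite ler_wpM2l ?mulr_ge0 ?ler0n ?(ltW beta_gt0) // lerB.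
  by rewrite le_eqVlt; apply/orP; left; apply/eqP; field; rewrite gt_eqF.
move: splitting; rewrite /powfun -/P; lra.
Qed.

Lemma powfun_dissipative V p : 1 <= p -> (forall n, (0 < n)%N -> V n = powfun p n) ->
  dissipative V.
Proof.
move=> p1 V_pow; have [N le_N] := natr_ge_eventually (2 * p).
apply: (@dissipative_of_linear_decay V (2 * beta * p) theta N) => // n Nn n0.
rewrite (eq_gen_L V_pow n0) V_pow //; split; first exact: powR_ge0.
exact: gen_L_powfun_le (le_N n Nn).
Qed.

Lemma in_S_or_powfun_dissipative V : in_S_or_powfun V -> dissipative V.
Proof.
case=> [|[p [p1 V_pow]]]; first exact: in_S_dissipative.
exact: powfun_dissipative p1 V_pow.
Qed.

Lemma lyapunov_bounds {psi V : nat -> R} {c M : R} : 0 < c ->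
  (forall n, (0 < n)%N -> c <= psi n) ->
  (forall n, (0 < n)%N -> `|L psi n| <= M) -> dissipative V ->
  exists a b xi zeta : R, a < b /\ 0 < zeta /\
    forall n, (0 < n)%N ->
      L V n <= a * V n + zeta * psi n /\
      b * psi n <= L psi n /\ L psi n <= xi * psi n.
Proof.
move=> c0 psi_ge L_psi_le V_diss.
have scale m n : 0 <= m -> (0 < n)%N -> m <= m / c * psi n.
  by move=> m0 n0; rewrite -mulrA ler_peMr // ler_pdivlMl // mulr1 psi_ge.
have M0 : 0 <= M := le_trans (normr_ge0 _) (L_psi_le 1%N isT).
pose a := - (M / c) - 1.
have [N le_N] := V_diss a.
have [MV MV0 le_MV] : exists2 MV, 0 < MV & forall n, L V n - a * V n <= MV.
  apply: (@bounded_above_of_eventually_le0 _ _ (maxn N 1)) => n.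
  by rewrite geq_max => /andP[Nn n0]; rewrite subr_le0 le_N.
exists a, (- (M / c)), (M / c), (MV / c); split; first by rewrite /a; lra.
split=> [|n n0]; first by rewrite divr_gt0.
have := scale _ n (ltW MV0) n0; have := scale _ n M0 n0.
have := le_MV n; have /ler_normlP[] := L_psi_le n n0.
by rewrite mulNr => *; split; [|split]; lra.
Qed.
End Generator.

Theorem lemma4p2 (R : realType) (beta theta gamma : R)
  (hbeta : 0 < beta) (htheta : 0 < theta) (hgamma : 0 < gamma) :
  exists psi : nat -> R,
    (forall n, (0 < n)%N -> 0 < psi n) /\
    (exists c : R, 0 < c /\ forall n, (0 < n)%N -> c <= psi n) /\
    (exists m n, (0 < m)%N /\ (0 < n)%N /\ psi m < psi n) /\
    (forall n, (0 < n)%N -> psi n <= 1) /\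
    forall V : nat -> R,
      (in_S V \/ exists p : R, 1 <= p /\ forall n, (0 < n)%N -> V n = powfun p n) ->
      (exists a b xi zeta : R, a < b /\ 0 < zeta /\
         forall n, (0 < n)%N ->
           gen_L beta theta gamma V n <= a * V n + zeta * psi n /\
           b * psi n <= gen_L beta theta gamma psi n /\
           gen_L beta theta gamma psi n <= xi * psi n) /\
      (exists R0 : R, forall r : R, R0 <= r ->
         let K := [set x : nat | (0 < x)%N /\ V x / r <= psi x] in
         K !=set0 /\ finite_set K /\
         forall x y t0, K x -> K y -> 0 < t0 ->
           (0 < moment_M beta theta gamma t0 x y)%E).
Proof.
have [M L_psi_le] := gen_L_psi_bounded beta theta gamma hbeta htheta hgamma.
exists (psi theta gamma); split; first by move=> n _; exact: psi_gt0.
split; first by exists (psi_min theta gamma); split=> [|n _];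
  [exact: psi_min_gt0 | exact: psi_min_le].
split; first by exists 2%N, 1%N; rewrite psi2_lt_psi1.
split; first by move=> n _; exact: psi_le1.
move=> V V_class; split.
  apply: (lyapunov_bounds beta theta gamma (psi_min_gt0 theta gamma htheta hgamma) _ L_psi_le).
    by move=> n _; exact: psi_min_le.
  exact: in_S_or_powfun_dissipative.
have psi_01 n : (0 < n)%N -> 0 < psi theta gamma n <= 1.
  by move=> _; rewrite psi_gt0 ?psi_le1.
have [R0 K_fin] := sublevel_psi_finite V_class psi_01.
exists R0 => r le_r K; have [K_ne K_finite] := K_fin r le_r; do 2!split => //.
by move=> x y t [x0 _] [y0 _] t0; exact: moment_M_gt0.
Qed.
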